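(* Let $\mathcal{H}$ be a family of simple $r$-uniform hypergraphs and let $G$ be an $r$-uniform multihypergraph in which every edge has the same multiplicity. Then there exists a simple $r$-uniform hypergraph $G'$ with $e(G')=e(G)$ and $\operatorname{ex}(G',\mathcal{H})\leq\operatorname{ex}(G,\mathcal{H})$.
   Context: $e(\cdot)$ counts edges with multiplicity. For an $r$-uniform (multi)hypergraph $G$, $\operatorname{ex}(G,\mathcal{H})$ is the maximum number of edges (with multiplicity) of a sub-multihypergraph of $G$ (sub-multiset of its edges) that contains no member of $\mathcal{H}$ as a subgraph. *)

From mathcomp Require Import all_boot.
From mathcomp Require Import boolp.
Set Implicit Arguments. Unset Strict Implicit. Unset Printing Implicit Defensive.

(* An r-uniform multihypergraph on a finite vertex type V is given by its
   multiplicity function: mult A = number of copies of the edge A. *)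
Definition multihypergraph (V : finType) := {ffun {set V} -> nat}.

Definition uniform (V : finType) (r : nat) (G : multihypergraph V) : Prop :=
  forall A : {set V}, 0 < G A -> #|A| = r.

Definition simple_mhg (V : finType) (G : multihypergraph V) : Prop :=
  forall A : {set V}, G A <= 1.

Definition nedges (V : finType) (G : multihypergraph V) : nat :=
  \sum_(A : {set V}) G A.

Definition uniform_simple (W : finType) (r : nat) (E : {set {set W}}) : Prop :=
  forall e, e \in E -> #|e| = r.

Definition contains (V W : finType) (F : multihypergraph V) (E : {set {set W}})
  : Prop :=
  exists phi : W -> V, injective phi /\ forall e, e \in E -> 0 < F (phi @: e).

Definition hfamily := forall W : finType, {set {set W}} -> Prop.

Definition Hfree (V : finType) (Hs : hfamily) (F : multihypergraph V) : Prop :=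
  forall (W : finType) (E : {set {set W}}), Hs W E -> ~ contains F E.

(* Multiplicities of F are
   bounded by e(G), so F ranges over a finite type. *)
Definition ex (V : finType) (G : multihypergraph V) (Hs : hfamily) : nat :=
  \max_(F : {ffun {set V} -> 'I_(nedges G).+1} |
          `[< (forall A, (F A : nat) <= G A) /\
              Hfree Hs [ffun A => (F A : nat)] >])
     \sum_(A : {set V}) (F A : nat).

From mathcomp Require Import all_boot.
From mathcomp Require Import boolp.

Set Implicit Arguments. Unset Strict Implicit. Unset Printing Implicit Defensive.

(* If every edge of G has multiplicity m, replace G by m vertex-disjoint copies
   of its (simple) support.  An H-free subgraph of the copies splits into its m
   layers; taking any layer with all multiplicities raised to m gives an H-free
   subgraph of G with m times the edges of that layer.  Hence every layer has at
   most ex(G)/m edges, and the m layers together at most ex(G). *)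

Definition support (V : finType) (G : multihypergraph V) : {set {set V}} :=
  [set A | 0 < G A].

Lemma nedges_indicator (V : finType) (E : {set {set V}}) :
  nedges [ffun B => nat_of_bool (B \in E)] = #|E|.
Proof.
rewrite /nedges (bigID (mem E)) /= [X in _ + X]big1 => [|B /negbTE]; last first.
  by rewrite ffunE => ->.
by rewrite addn0 -sum1_card; apply: eq_bigr => B BE; rewrite ffunE BE.
Qed.

Lemma nedges_const (V : finType) (G : multihypergraph V) (m : nat) :
  (forall A, 0 < G A -> G A = m) -> nedges G = #|support G| * m.
Proof.
move=> Gm; rewrite /nedges (bigID (mem (support G))) /= [X in _ + X]big1.
  by rewrite addn0 -sum_nat_const; apply: eq_bigr => A; rewrite inE => /Gm.
by move=> A; rewrite inE lt0n negbK => /eqP.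
Qed.

Lemma contains_inj_map (V U W : finType) (f : V -> U) (F1 : multihypergraph V)
    (F2 : multihypergraph U) (E : {set {set W}}) :
  injective f -> (forall A, 0 < F1 A -> 0 < F2 (f @: A)) ->
  contains F1 E -> contains F2 E.
Proof.
move=> f_inj F12 [phi [phi_inj phiE]]; exists (f \o phi); split.
  exact: inj_comp.
by move=> e eE; rewrite imset_comp; apply/F12/phiE.
Qed.

Lemma Hfree_inj_map (V U : finType) (Hs : hfamily) (f : V -> U)
    (F1 : multihypergraph V) (F2 : multihypergraph U) :
  injective f -> (forall A, 0 < F1 A -> 0 < F2 (f @: A)) ->
  Hfree Hs F2 -> Hfree Hs F1.
Proof.
move=> f_inj F12 F2free W E HE F1E.
exact: F2free HE (contains_inj_map f_inj F12 F1E).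
Qed.

Section Extremal.

Variables (V : finType) (Hs : hfamily) (G : multihypergraph V).

Lemma nedges_le_ex (F : multihypergraph V) :
  (forall A, F A <= G A) -> Hfree Hs F -> nedges F <= ex G Hs.
Proof.
move=> FG Ffree.
have F_small A : F A < (nedges G).+1.
  by rewrite ltnS (leq_trans (FG A)) // /nedges (bigD1 A) //= leq_addr.
pose F' : {ffun {set V} -> 'I_(nedges G).+1} := [ffun A => Ordinal (F_small A)].
have F'F : [ffun A => (F' A : nat)] = F by apply/ffunP => A; rewrite !ffunE.
have -> : nedges F = \sum_A (F' A : nat).
  by rewrite /nedges; apply: eq_bigr => A _; rewrite ffunE.
apply: (leq_bigmax_cond F'); apply/asboolP; rewrite F'F; split=> // A.
by rewrite ffunE; apply: FG.
Qed.

Lemma ex_le_of_bound (n : nat) :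
  (forall F : multihypergraph V,
      (forall A, F A <= G A) -> Hfree Hs F -> nedges F <= n) ->
  ex G Hs <= n.
Proof.
move=> bound; apply/bigmax_leqP => F /asboolP [FG Ffree].
have <- : nedges [ffun A => (F A : nat)] = \sum_A (F A : nat).
  by apply: eq_bigr => A _; rewrite ffunE.
by apply: bound Ffree => A; rewrite ffunE.
Qed.

End Extremal.

Lemma sum_ord_le_of_mul_le (m n : nat) (g : 'I_m -> nat) :
  (forall i, m * g i <= n) -> \sum_(i < m) g i <= n.
Proof.
case: m g => [|m] g gn; first by rewrite big_ord0.
have gdiv i : g i <= n %/ m.+1 by rewrite leq_divRL // mulnC gn.
apply: leq_trans (leq_divM n m.+1).
rewrite mulnC -[X in X * _]card_ord -sum_nat_const.
exact: leq_sum.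
Qed.

Section Copies.

Variables (V : finType) (m : nat).

Definition layer (i : 'I_m) (A : {set V}) : {set V * 'I_m} := pair^~ i @: A.

Lemma pair_inj (i : 'I_m) : injective (pair^~ i : V -> V * 'I_m).
Proof. by move=> a b [->]. Qed.

Lemma mem_layer (i : 'I_m) (A : {set V}) (v : V) :
  ((v, i) \in layer i A) = (v \in A).
Proof. exact/mem_imset/pair_inj. Qed.

Lemma card_layer (i : 'I_m) (A : {set V}) : #|layer i A| = #|A|.
Proof. exact/card_imset/pair_inj. Qed.

Lemma layer_inj (i j : 'I_m) (A B : {set V}) :
  A != set0 -> layer i A = layer j B -> (i, A) = (j, B).
Proof.
move=> /set0Pn [v vA] AB.
have /imsetP [w _ [_ ij]] : (v, i) \in layer j B by rewrite -AB mem_layer.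
subst j.
by congr pair; apply/setP => x; rewrite -!(mem_layer i) AB.
Qed.

Variable S : {set {set V}}.

Definition layers : {set {set V * 'I_m}} :=
  [set layer p.1 p.2 | p in setX [set: 'I_m] S].

Definition copies : multihypergraph (V * 'I_m)%type :=
  [ffun B => nat_of_bool (B \in layers)].

Lemma simple_copies : simple_mhg copies.
Proof. by move=> B; rewrite ffunE leq_b1. Qed.

Lemma uniform_copies (r : nat) : uniform_simple r S -> uniform r copies.
Proof.
move=> Sr B; rewrite ffunE lt0b => /imsetP [[i A]].
by rewrite in_setX /= => /andP [_ /Sr <-] ->; rewrite card_layer.
Qed.

Hypothesis S_nonempty : set0 \notin S.

Lemma layers_inj : {in setX [set: 'I_m] S &, injective (fun p => layer p.1 p.2)}.
Proof.
move=> [i A] [j B]; rewrite in_setX => /andP [_ AS] _.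
by apply: layer_inj; apply: contraNneq S_nonempty => <-.
Qed.

Lemma nedges_copies : nedges copies = m * #|S|.
Proof.
rewrite nedges_indicator card_in_imset ?cardsX ?cardsT ?card_ord //.
exact: layers_inj.
Qed.

Lemma nedges_sub_copies (F : multihypergraph (V * 'I_m)%type) :
  (forall B, F B <= copies B) ->
  nedges F = \sum_(i < m) \sum_(A in S) F (layer i A).
Proof.
move=> Fcopies; rewrite /nedges (bigID (mem layers)) /= [X in _ + X]big1.
  rewrite addn0 (big_imset _ layers_inj) pair_big_dep /=.
  by apply: eq_bigl => -[i A]; rewrite in_setX inE.
move=> B Bout; apply/eqP; rewrite -leqn0.
by rewrite (leq_trans (Fcopies B)) // ffunE (negbTE Bout).
Qed.

End Copies.

Lemma ex_copies_support (V : finType) (Hs : hfamily) (G : multihypergraph V)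
    (m : nat) :
  (forall A, 0 < G A -> G A = m) -> set0 \notin support G ->
  ex (copies m (support G)) Hs <= ex G Hs.
Proof.
move=> Gm support_nonempty; apply: ex_le_of_bound => F Fcopies Ffree.
rewrite (nedges_sub_copies support_nonempty Fcopies); apply: sum_ord_le_of_mul_le => i.
have F_le1 A : F (layer i A) <= 1.
  by apply: leq_trans (Fcopies _) _; rewrite ffunE leq_b1.
pose Fi : multihypergraph V := [ffun A => G A * F (layer i A)].
have -> : m * \sum_(A in support G) F (layer i A) = nedges Fi.
  rewrite big_distrr /nedges [RHS](bigID (mem (support G))) /= [X in _ = _ + X]big1.
    by rewrite addn0; apply: eq_bigr => A; rewrite inE ffunE => /Gm ->.
  by move=> A; rewrite inE ffunE lt0n negbK => /eqP ->.
apply: nedges_le_ex => [A|].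
  by rewrite ffunE -[leqRHS]muln1 leq_mul2l F_le1 orbT.
apply: Hfree_inj_map (pair_inj (i := i)) _ Ffree => A.
by rewrite ffunE muln_gt0 => /andP [].
Qed.

Theorem proposition2p9 (r : nat) (hr : 0 < r) (Hs : hfamily)
  (hHs : forall (W : finType) (E : {set {set W}}), Hs W E -> uniform_simple r E)
  (V : finType) (G : multihypergraph V) (hG : uniform r G)
  (hmult : exists m : nat, forall A : {set V}, 0 < G A -> G A = m) :
  exists (V' : finType) (G' : multihypergraph V'),
    [/\ uniform r G', simple_mhg G', nedges G' = nedges G
      & ex G' Hs <= ex G Hs].
Proof.
have [m Gm] := hmult.
have support_r : uniform_simple r (support G) by move=> A; rewrite inE => /hG.
have support_nonempty : set0 \notin support G.
  by apply/negP => /support_r; rewrite cards0 => r0; move: hr; rewrite -r0.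
exists (V * 'I_m)%type, (copies m (support G)); split.
- exact: uniform_copies.
- exact: simple_copies.
- by rewrite nedges_copies // (nedges_const Gm) mulnC.
- exact: ex_copies_support.
Qed.
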